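(* Let $(\Delta,\mathfrak o,m,q)$ be a quantized Brauer graph such that $\Delta$ contains no loops. Then there exist a finite abelian group $G$ and a Brauer weighting $W:\mathcal Z_\Delta\to G$ of $(\Delta,\mathfrak o,m,q)$ such that the graph $\Delta_W$ of the quantized Brauer covering graph $(\Delta_W,\mathfrak o_W,m_W,q_W)$ has no multiple edges, i.e. no two distinct edges of $\Delta_W$ have the same pair of endpoints.
   Context: Brauer graphs. A Brauer graph $(\Delta,\mathfrak o,m)$ is a finite connected graph $\Delta$ (loops and multiple edges allowed) with vertex set $\Delta_0$, edge set $\Delta_1$ and at least one edge, together with a multiplicity function $m:\Delta_0\to\mathbb Z_{\ge 1}$ and, for each vertex $\mu$, a cyclic ordering $\mathfrak o$ of the edges incident with $\mu$. A loop at $\mu$ occurs twice in the cyclic ordering at $\mu$; its two occurrences are regarded as two distinct elements of $\Delta_1$ (each with its own successor). Edge $j$ is the successor of edge $i$ at $\mu$ if $j$ immediately follows $i$ in the cyclic ordering at $\mu$. The valency $\operatorname{val}(\mu)$ is the number of edges incident with $\mu$, loops counted twice; if $\operatorname{val}(\mu)=1$ the unique edge at $\mu$ is its own successor. An edge $i$ is truncated at its endpoint $\mu$ if $\operatorname{val}(\mu)=1$ and $m(\mu)=1$. Fix a field $K$. A quantized Brauer graph $(\Delta,\mathfrak o,m,q)$ is a Brauer graph with a function $q:\mathcal X_\Delta\to K\setminus\{0\}$, $(i,\mu)\mapsto q_{i,\mu}$, where $\mathcal X_\Delta$ is the set of pairs $(i,\mu)$ with $\mu$ an endpoint of $i$ and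 $i$ not truncated at either of its endpoints. Successor weightings. Let $G$ be a finite abelian group. For $\mu\in\Delta_0$ let $\mathcal Z_\mu$ be the set of pairs $(i,j)$ of edges with $j$ the successor of $i$ at $\mu$, and $\mathcal Z_\Delta=\bigsqcup_{\mu\in\Delta_0}\mathcal Z_\mu$ (disjoint union). A successor weighting is a function $W:\mathcal Z_\Delta\to G$. Put $\omega_\mu=\prod_{(i,j)\in\mathcal Z_\mu}W(i,j)$, let $\operatorname{ord}(\mu)$ be the order of $\omega_\mu$ in $G$, and $H_\mu=\langle\omega_\mu\rangle$. $W$ is a Brauer weighting if $\operatorname{ord}(\mu)$ divides $m(\mu)$ for all $\mu\in\Delta_0$. For each $\mu$, $\sim$ is the equivalence relation on the set of pairs $(i,H_\mu g)$ ($i$ incident with $\mu$, $g\in G$) generated by $(i,H_\mu g)\sim(j,H_\mu gW(i,j))$ whenever $j$ is the successor of $i$ at $\mu$; the class of $(i,H_\mu g)$ is $[i,H_\mu g]$, and $\mathcal D_\mu$ is the set of classes. Brauer covering graph. The graph $\Delta_W$ has vertices $\mu_d$ ($\mu\in\Delta_0$, $d\in\mathcal D_\mu$) and edges $i_g$ ($i\in\Delta_1$, $g\in G$). If $i$ has endpoints $\mu$ and $\nu$, then $i_g$ has endpoints $\mu_{[i,H_\mu g]}$ and $\nu_{[i,H_\nu g]}$; if $i$ is a loop at $\mu$ with its two occurrences $i,\hat i$, then $i_g$ has endpoints $\mu_{[i,H_\mu g]}$ and $\mu_{[\hat i,H_\mu g]}$. The cyclic ordering $\mathfrak o_W$ is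 defined by: if $j$ is the successor of $i$ at $\mu$, then $j_{gW(i,j)}$ is the successor of $i_g$ at $\mu_{[i,H_\mu g]}$. For a Brauer weighting, $m_W(\mu_d)=m(\mu)/\operatorname{ord}(\mu)$; $(\Delta_W,\mathfrak o_W,m_W)$ is the Brauer covering graph. Given a quantizing function $q$ on $\Delta$, $q_W(i_g,\mu_d)=q_{i,\mu}$, and $(\Delta_W,\mathfrak o_W,m_W,q_W)$ is the quantized Brauer covering graph. *)

From HB Require Import structures.
From mathcomp Require Import all_boot all_order all_algebra all_fingroup.
Set Implicit Arguments. Unset Strict Implicit. Unset Printing Implicit Defensive.

(* ENCODING of a Brauer graph (Delta, o, m):
   - vertices : a finType V;  edges : a finType E;
   - ends e = (mu, nu) : the two endpoints of edge e (a loop has mu = nu);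
   - half-edges ("occurrences" of an edge at an endpoint) : E * bool,
     (e, false) is the occurrence of e at (ends e).1, (e, true) at (ends e).2.
     For a loop these are the two distinct occurrences i, ^i of the paper.
   - the cyclic orderings o are encoded by a permutation [succ] of the
     half-edges: succ h is the successor of h at the vertex of h; the cyclic
     ordering at mu is the single succ-cycle on the half-edges at mu. *)

Definition hvert (V E : finType) (ends : E -> V * V) (h : E * bool) : V :=
  if h.2 then (ends h.1).2 else (ends h.1).1.

Definition adjv (V E : finType) (ends : E -> V * V) : rel V :=
  fun u v => [exists e : E, (ends e == (u, v)) || (ends e == (v, u))].

Definition is_brauer_graph (V E : finType) (ends : E -> V * V)
    (succ : E * bool -> E * bool) (m : V -> nat) : Prop :=
  [/\ 0 < #|E|,
      forall u v : V, connect (adjv ends) u v,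
      injective succ
      /\ (forall h, hvert ends (succ h) = hvert ends h),
      forall h h', hvert ends h = hvert ends h' -> fconnect succ h h'
    & forall v, 0 < m v ].

Definition valency (V E : finType) (ends : E -> V * V) (mu : V) : nat :=
  #|[pred h : E * bool | hvert ends h == mu]|.

Definition truncated_at (V E : finType) (ends : E -> V * V) (m : V -> nat)
    (h : E * bool) : bool :=
  (valency ends (hvert ends h) == 1) && (m (hvert ends h) == 1).

Definition in_XDelta (V E : finType) (ends : E -> V * V) (m : V -> nat)
    (h : E * bool) : bool :=
  ~~ truncated_at ends m (h.1, false) && ~~ truncated_at ends m (h.1, true).

(* quantized Brauer graph: q nonzero on X_Delta (values outside are irrelevant) *)
Definition is_quantizing (K : fieldType) (V E : finType) (ends : E -> V * V)
    (m : V -> nat) (q : E * bool -> K) : Prop :=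
  forall h, in_XDelta ends m h -> q h != 0%R.

Definition no_loops (V E : finType) (ends : E -> V * V) : Prop :=
  forall e : E, (ends e).1 != (ends e).2.

(* Successor weightings: Z_mu = {(i, succ i) : i at mu}, indexed by the
   half-edge i; so W : E * bool -> G, W h = W(h, succ h). *)
Definition omega (gT : finGroupType) (V E : finType) (ends : E -> V * V)
    (W : E * bool -> gT) (mu : V) : gT :=
  (\prod_(h | hvert ends h == mu) W h)%g.

Definition Hmu (gT : finGroupType) (V E : finType) (ends : E -> V * V)
    (W : E * bool -> gT) (mu : V) : {set gT} :=
  <[omega ends W mu]>%g.

Definition is_brauer_weighting (gT : finGroupType) (V E : finType)
    (ends : E -> V * V) (m : V -> nat) (W : E * bool -> gT) : Prop :=
  forall mu : V, #[omega ends W mu]%g %| m mu.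

Definition sim_step (gT : finGroupType) (E : finType)
    (succ : E * bool -> E * bool) (W : E * bool -> gT) :
    rel ((E * bool) * {set gT}) :=
  fun x y => (y.1 == succ x.1) && (y.2 == (x.2 :* W x.1)%g).

Definition sim (gT : finGroupType) (E : finType)
    (succ : E * bool -> E * bool) (W : E * bool -> gT) :
    rel ((E * bool) * {set gT}) :=
  connect (fun x y => sim_step succ W x y || sim_step succ W y x).

(* The endpoint of i_g (i = h.1) on the side h: the vertex mu_[h, H_mu g] of
   Delta_W with mu = hvert h.  Two such endpoints are the same vertex of
   Delta_W iff same mu and same ~-class. *)
Definition same_vertex_W (gT : finGroupType) (V E : finType)
    (ends : E -> V * V) (succ : E * bool -> E * bool) (W : E * bool -> gT)
    (h : E * bool) (g : gT) (h' : E * bool) (g' : gT) : bool :=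
  (hvert ends h == hvert ends h') &&
  sim succ W (h, (Hmu ends W (hvert ends h) :* g)%g)
             (h', (Hmu ends W (hvert ends h') :* g')%g).

Definition same_endpoints_W (gT : finGroupType) (V E : finType)
    (ends : E -> V * V) (succ : E * bool -> E * bool) (W : E * bool -> gT)
    (i : E) (g : gT) (j : E) (g' : gT) : bool :=
  let sv := same_vertex_W ends succ W in
  (sv (i, false) g (j, false) g' && sv (i, true) g (j, true) g')
  || (sv (i, false) g (j, true) g' && sv (i, true) g (j, false) g').

Definition no_multiple_edges_W (gT : finGroupType) (V E : finType)
    (ends : E -> V * V) (succ : E * bool -> E * bool) (W : E * bool -> gT) : Prop :=
  forall (i j : E) (g g' : gT), (i, g) != (j, g') ->
    ~~ same_endpoints_W ends succ W i g j g'.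

From HB Require Import structures.
From mathcomp Require Import all_boot all_order all_algebra all_fingroup.
Set Implicit Arguments. Unset Strict Implicit. Unset Printing Implicit Defensive.
Import GRing.Theory FinRing.Theory.

(* We take for W a coboundary: fix a finite abelian group U
   and a "potential" f on half-edges, and put W h = f h - f (succ h).
   - Since succ permutes the half-edges at each vertex mu, the product
     omega_mu telescopes to 0, so every H_mu is trivial and W is a Brauer
     weighting for every multiplicity function m.
   - The map (h, C) |-> C + f h is invariant under the generating step of ~,
     hence two endpoints mu_[h, g] and mu_[h', g'] of edges of Delta_W can only
     coincide when g + f h = g' + f h'.
   - With U = (Z/3)^E, f (e, false) = the e-th basis vector and f (e, true) = 0,
     these equations force two edges i_g, j_g' with the same endpoints to be
     equal: the "parallel" case gives e_i = e_j, the "crossed" case gives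
     e_i + e_j = 0, impossible in (Z/3)^E. *)

Lemma finZmod_prodE (U : finZmodType) (I : finType) (P : pred I) (F : I -> U) :
  (\prod_(i | P i) F i)%g = (\sum_(i | P i) F i)%R.
Proof. by apply: (big_ind2 (fun x y : U => x = y)) => // a1 a2 b1 b2 -> ->. Qed.

Section CoboundaryWeighting.
Variables (V E : finType) (ends : E -> V * V) (succ : E * bool -> E * bool).
Hypothesis succ_inj : injective succ.
Hypothesis succ_hvert : forall h, hvert ends (succ h) = hvert ends h.
Variables (U : finZmodType) (f : E * bool -> U).

Definition coboundary (h : E * bool) : U := (f h - f (succ h))%R.

(* omega_mu telescopes: succ permutes the half-edges at mu. *)
Lemma omega_coboundary (mu : V) : omega ends coboundary mu = 1%g.
Proof.
rewrite /omega finZmod_prodE /coboundary sumrB (reindex_inj succ_inj) /=.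
by under eq_bigl => h do rewrite succ_hvert; rewrite subrr.
Qed.

Lemma coboundary_brauer_weighting (m : V -> nat) :
  is_brauer_weighting ends m coboundary.
Proof. by move=> mu; rewrite omega_coboundary order1 dvd1n. Qed.

Lemma Hmu_coboundary (mu : V) : Hmu ends coboundary mu = 1%g.
Proof. by rewrite /Hmu omega_coboundary cycle1. Qed.

Definition sim_invariant (x : (E * bool) * {set U}) : {set U} := (x.2 :* f x.1)%g.

Lemma sim_step_invariant x y :
  sim_step succ coboundary x y -> sim_invariant x = sim_invariant y.
Proof.
case: x y => [h C] [h' C'] /andP[/= /eqP-> /eqP->].
rewrite /sim_invariant /= -rcosetM.
by congr (_ :* _)%g; rewrite zmodMgE /coboundary subrK.
Qed.

Lemma sim_invariantP x y :
  sim succ coboundary x y -> sim_invariant x = sim_invariant y.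
Proof.
have closed_inv : closed (fun a b => sim_step succ coboundary a b ||
                                     sim_step succ coboundary b a)
                         [pred z | sim_invariant z == sim_invariant x].
  by move=> a b /orP[] /sim_step_invariant inv_ab; rewrite !inE inv_ab.
by move/(closed_connect closed_inv); rewrite !inE eqxx => /esym/eqP.
Qed.

Lemma same_vertex_coboundary h g h' g' :
  same_vertex_W ends succ coboundary h g h' g' -> (g + f h = g' + f h')%R.
Proof.
case/andP=> _ /sim_invariantP; rewrite /sim_invariant /= !Hmu_coboundary.
by rewrite !mul1g !mulg_set1 => /set1_inj; rewrite !zmodMgE.
Qed.

Hypothesis f_second : forall e, f (e, true) = 0%R.
Hypothesis f_first_inj : injective (fun e => f (e, false)).
Hypothesis f_first_sum : forall i j, (f (i, false) + f (j, false) != 0)%R.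

Lemma coboundary_no_multiple_edges : no_multiple_edges_W ends succ coboundary.
Proof.
move=> i j g g' neq; apply/negP; rewrite /same_endpoints_W.
case/orP=> /andP[/same_vertex_coboundary s1 /same_vertex_coboundary s2];
  move: s1 s2; rewrite !f_second !addr0.
- move=> s1 g_eq; subst g'; move/addrI/f_first_inj: s1 => ij.
  by subst j; rewrite eqxx in neq.
- move=> s1 g_eq; subst g; move: s1; rewrite -addrA -{2}[g']addr0 => /addrI.
  by move/eqP; rewrite (negPf (f_first_sum j i)).
Qed.

End CoboundaryWeighting.

Section BasisPotential.
Variable E : finType.

Definition basis_vec (e : E) : 'rV['Z_3]_#|E| := delta_mx ord0 (enum_rank e).

Definition basis_potential (h : E * bool) : 'rV['Z_3]_#|E| :=
  if h.2 then 0%R else basis_vec h.1.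

Lemma basis_vec_entry e e' : basis_vec e ord0 (enum_rank e') = (e == e')%:R%R.
Proof. by rewrite /basis_vec mxE eqxx (inj_eq enum_rank_inj) eq_sym. Qed.

Lemma basis_vec_inj : injective basis_vec.
Proof.
move=> i j /(congr1 (fun M : 'rV['Z_3]_#|E| => M ord0 (enum_rank i))).
by rewrite !basis_vec_entry eqxx; case: eqP.
Qed.

(* In characteristic 3, e_i + e_j has entry 1 or 2 at i, so it is nonzero. *)
Lemma basis_vec_sum_neq0 i j : (basis_vec i + basis_vec j != 0)%R.
Proof.
apply/eqP=> /(congr1 (fun M : 'rV['Z_3]_#|E| => M ord0 (enum_rank i))).
by rewrite mxE !basis_vec_entry eqxx mxE; case: (j == i).
Qed.

End BasisPotential.

Theorem proposition6p6 (K : fieldType) (V E : finType) (ends : E -> V * V)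
    (succ : E * bool -> E * bool) (m : V -> nat) (q : E * bool -> K) :
  is_brauer_graph ends succ m ->
  is_quantizing ends m q ->
  no_loops ends ->
  exists (gT : finGroupType) (W : E * bool -> gT),
    [/\ abelian [set: gT],
        is_brauer_weighting ends m W
      & no_multiple_edges_W ends succ W].
Proof.
case=> _ _ [succ_inj succ_hvert] _ _ _ _.
exists 'rV['Z_3]_#|E|, (coboundary succ (@basis_potential E)); split.
- exact: zmod_abelian.
- exact: coboundary_brauer_weighting.
- apply: coboundary_no_multiple_edges => //.
  + by move=> i j; apply: basis_vec_inj.
  + exact: basis_vec_sum_neq0.
Qed.
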